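(* Let $K$ be a field with $\operatorname{char}(K)\neq2$, and let $(C_1,C_0,s,t,e,k)$ be a categorical Lie $K$-algebra (so $C_1,C_0$ are Lie $K$-algebras) and $\tau\colon C_0\times C_0\to C_1$ a $K$-bilinear map. Define $\tau^-\colon C_0\times C_0\to C_1$ by $\tau^-_{a,b}=-\tau_{b,a}$. Then $(C_1,C_0,s,t,e,k,\tau)$ is a braided categorical Lie $K$-algebra if and only if $(C_1,C_0,s,t,e,k,(\tau,\tau^-))$ is a braided categorical Leibniz $K$-algebra.
   Context: A Leibniz $K$-algebra: bilinear bracket with $[x,[y,z]]=[[x,y],z]-[[x,z],y]$; a Lie algebra is an antisymmetric one. A categorical Lie (resp. Leibniz) algebra $(C_1,C_0,s,t,e,k)$ is an internal category in Lie (resp. Leibniz) algebras: homomorphisms $s,t\colon C_1\to C_0$, $e\colon C_0\to C_1$, $k\colon\{(x,y)\in C_1\times C_1:t(x)=s(y)\}\to C_1$ with $se=te=\mathrm{Id}$, $sk(x,y)=s(x)$, $tk(x,y)=t(y)$, $k(es(x),x)=x=k(x,et(x))$, $k$ associative ($k(x,y)$ is the composite ''$x$ then $y$''). A braiding on a categorical Lie algebra is a bilinear $\tau\colon C_0\times C_0\to C_1$ with, for $a,b,c\in C_0$, $x,y\in C_1$: $s(\tau_{a,b})=[a,b]$, $t(\tau_{a,b})=[b,a]$; $k([x,y],\tau_{t(x),t(y)})=k(\tau_{s(x),s(y)},[y,x])$; $\tau_{[a,b],c}=\tau_{a,[b,c]}-\tau_{b,[a,c]}$; $\tau_{a,[b,c]}=\tau_{[a,b],c}-\tau_{[a,c],b}$.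 A braiding on a categorical Leibniz algebra is a pair of bilinear $\tau,\psi\colon C_0\times C_0\to C_1$ with $s(\tau_{a,b})=s(\psi_{a,b})=[a,b]$, $t(\tau_{a,b})=t(\psi_{a,b})=-[a,b]$; $k([x,y],\tau_{t(x),t(y)})=k(\tau_{s(x),s(y)},-[x,y])$ and likewise for $\psi$; $\tau_{a,[b,c]}=\tau_{[a,b],c}-\tau_{[a,c],b}$; $\psi_{a,[b,c]}=\tau_{[a,b],c}-\psi_{[a,c],b}$; $\tau_{a,[b,c]}=\tau_{[a,b],c}-\psi_{[a,c],b}$; $\psi_{a,[b,c]}=\psi_{[a,b],c}-\psi_{[a,c],b}$. *)

From HB Require Import structures.
From mathcomp Require Import all_boot all_algebra.
Set Implicit Arguments. Unset Strict Implicit. Unset Printing Implicit Defensive.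
Import GRing.Theory.
Local Open Scope ring_scope.

Section Defs.
Variable K : fieldType.

Definition is_linear (U V : lmodType K) (f : U -> V) : Prop :=
  forall (a : K) (x y : U), f (a *: x + y) = a *: f x + f y.

Definition is_bilinear (U W V : lmodType K) (f : U -> W -> V) : Prop :=
  (forall (a : K) (x y : U) (z : W), f (a *: x + y) z = a *: f x z + f y z) /\
  (forall (a : K) (z : U) (x y : W), f z (a *: x + y) = a *: f z x + f z y).

Definition is_leibniz_alg (V : lmodType K) (br : V -> V -> V) : Prop :=
  is_bilinear br /\
  forall x y z, br x (br y z) = br (br x y) z - br (br x z) y.

Definition is_lie_alg (V : lmodType K) (br : V -> V -> V) : Prop :=
  is_leibniz_alg br /\ forall x y, br x y = - br y x.

Definition is_alg_hom (U V : lmodType K) (brU : U -> U -> U) (brV : V -> V -> V)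
  (f : U -> V) : Prop :=
  is_linear f /\ forall x y, f (brU x y) = brV (f x) (f y).

Section Cat.
Variables (C1 C0 : lmodType K) (br1 : C1 -> C1 -> C1) (br0 : C0 -> C0 -> C0).
Variables (s t : C1 -> C0) (e : C0 -> C1) (k : C1 -> C1 -> C1).

(* The composition k is given as a total function, but only its values on the
   pullback {(x,y) | t x = s y} matter; all axioms are restricted to it. *)
Definition composable (x y : C1) : Prop := t x = s y.

(* internal category in (bracket) algebras: s, t, e, k homomorphisms, where the
   pullback carries the componentwise linear structure and bracket *)
Definition is_internal_cat : Prop :=
  [/\ is_alg_hom br1 br0 s /\ is_alg_hom br1 br0 t /\ is_alg_hom br0 br1 e,
      (forall (a : K) x y x' y', composable x y -> composable x' y' ->
          k (a *: x + x') (a *: y + y') = a *: k x y + k x' y') /\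
      (forall x y x' y', composable x y -> composable x' y' ->
          k (br1 x x') (br1 y y') = br1 (k x y) (k x' y')),
      (forall a, s (e a) = a) /\ (forall a, t (e a) = a),
      (forall x y, composable x y -> s (k x y) = s x /\ t (k x y) = t y) /\
      (forall x, k (e (s x)) x = x /\ k x (e (t x)) = x) &
      (forall x y z, composable x y -> composable y z ->
          k (k x y) z = k x (k y z))].

Definition is_cat_lie_alg : Prop :=
  [/\ is_lie_alg br1, is_lie_alg br0 & is_internal_cat].

Definition is_cat_leibniz_alg : Prop :=
  [/\ is_leibniz_alg br1, is_leibniz_alg br0 & is_internal_cat].

Definition is_lie_braiding (tau : C0 -> C0 -> C1) : Prop :=
  [/\ is_bilinear tau,
      (forall a b, s (tau a b) = br0 a b /\ t (tau a b) = br0 b a),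
      (forall x y, k (br1 x y) (tau (t x) (t y)) = k (tau (s x) (s y)) (br1 y x)),
      (forall a b c, tau (br0 a b) c = tau a (br0 b c) - tau b (br0 a c)) &
      (forall a b c, tau a (br0 b c) = tau (br0 a b) c - tau (br0 a c) b)].

Definition is_leibniz_braiding (tau psi : C0 -> C0 -> C1) : Prop :=
  [/\ is_bilinear tau /\ is_bilinear psi,
      (forall a b, s (tau a b) = br0 a b /\ s (psi a b) = br0 a b),
      (forall a b, t (tau a b) = - br0 a b /\ t (psi a b) = - br0 a b),
      (forall x y, k (br1 x y) (tau (t x) (t y)) = k (tau (s x) (s y)) (- br1 x y)) /\
      (forall x y, k (br1 x y) (psi (t x) (t y)) = k (psi (s x) (s y)) (- br1 x y)) &
      [/\ forall a b c, tau a (br0 b c) = tau (br0 a b) c - tau (br0 a c) b,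
          forall a b c, psi a (br0 b c) = tau (br0 a b) c - psi (br0 a c) b,
          forall a b c, tau a (br0 b c) = tau (br0 a b) c - psi (br0 a c) b &
          forall a b c, psi a (br0 b c) = psi (br0 a b) c - psi (br0 a c) b]].

End Cat.
End Defs.

(* Under antisymmetry of the brackets the source/target and naturality axioms
   of the two notions of braiding coincide, using that [s], [t] and the
   composition [k] commute with negation.  For the identities, substituting
   the first Lie identity into the second gives
   [tau_{[a,c],b} = - tau_{b,[a,c]}]; with it, each of the four Leibniz
   identities for [(tau, tau^-)] reduces to one of the two Lie ones. *)

From HB Require Import structures.
From mathcomp Require Import all_boot all_algebra.
Import GRing.Theory.
Local Open Scope ring_scope.

Section LinearMaps.
Context {K : fieldType}.

Lemma is_linear0 {U V : lmodType K} {f : U -> V} : is_linear f -> f 0 = 0.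
Proof.
move=> lin_f; have := lin_f 1 0 0; rewrite !scale1r !addr0 -{1}[f 0]addr0.
by move/addrI/esym.
Qed.

Lemma is_linearN {U V : lmodType K} {f : U -> V} :
  is_linear f -> forall x, f (- x) = - f x.
Proof.
move=> lin_f x; have := lin_f (-1) x 0.
by rewrite !addr0 !scaleN1r (is_linear0 lin_f) addr0.
Qed.

Lemma is_bilinear_swapN (U V : lmodType K) (f : U -> U -> V) :
  is_bilinear f -> is_bilinear (fun a b => - f b a).
Proof.
case=> lin_l lin_r; split=> [a x y z | a z x y].
- by rewrite lin_r opprD scalerN.
- by rewrite lin_l opprD scalerN.
Qed.

End LinearMaps.

Section Braidings.
Context {K : fieldType} {C1 C0 : lmodType K}.
Context {br1 : C1 -> C1 -> C1} {br0 : C0 -> C0 -> C0}.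
Context {s t : C1 -> C0} {e : C0 -> C1} {k : C1 -> C1 -> C1}.
Hypotheses (br1_anti : forall x y, br1 x y = - br1 y x)
           (br0_anti : forall a b, br0 a b = - br0 b a).

Lemma comp_oppr (u v : C1) : is_internal_cat br1 br0 s t e k ->
  composable s t u v -> k (- u) (- v) = - k u v.
Proof.
move=> [[[lin_s _] [[lin_t _] _]] [lin_k _] _ _ _] uv.
have comp00 : composable s t 0 0.
  by rewrite /composable (is_linear0 lin_s) (is_linear0 lin_t).
have k00 : k 0 0 = 0.
  have := lin_k 1 0 0 0 0 comp00 comp00.
  rewrite !scale1r !addr0 -{1}[k 0 0]addr0.
  by move/addrI/esym.
by have := lin_k (-1) u v 0 0 uv comp00; rewrite !addr0 !scaleN1r k00 addr0.
Qed.

Lemma lie_braiding_br_skew {tau : C0 -> C0 -> C1} :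
  is_lie_braiding br1 br0 s t k tau ->
  forall a b c, tau (br0 a c) b = - tau b (br0 a c).
Proof.
move=> [_ _ _ hex1 hex2] a b c; apply/eqP; rewrite -addr_eq0 addrC.
have := hex2 a b c; rewrite hex1 -addrA -opprD -{1}[tau a _]addr0.
by move/addrI/esym/eqP; rewrite oppr_eq0.
Qed.

Lemma lie_to_leibniz_braiding {tau : C0 -> C0 -> C1} :
  is_internal_cat br1 br0 s t e k -> is_lie_braiding br1 br0 s t k tau ->
  is_leibniz_braiding br1 br0 s t k tau (fun a b => - tau b a).
Proof.
move=> cat braid; have skew := lie_braiding_br_skew braid.
have [[[lin_s s_br] [[lin_t t_br] _]] _ _ _ _] := cat.
have [bilin_tau st_tau comp_tau hex1 hex2] := braid.
split.
- by split; last exact: is_bilinear_swapN.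
- move=> a b; split; first exact: (st_tau a b).1.
  by rewrite (is_linearN lin_s) (st_tau b a).1 [RHS]br0_anti.
- move=> a b; split; first by rewrite (st_tau a b).2.
  by rewrite (is_linearN lin_t) (st_tau b a).2.
- split=> x y; first by rewrite comp_tau -br1_anti.
  have yx_tau : composable s t (br1 y x) (tau (t y) (t x)).
    by rewrite /composable t_br (st_tau _ _).1.
  have tau_xy : composable s t (tau (s y) (s x)) (br1 x y).
    by rewrite /composable s_br (st_tau _ _).2.
  by rewrite {1}br1_anti comp_oppr // comp_tau -comp_oppr.
- split=> a b c.
  + exact: hex2.
  + by rewrite (skew b a c) !opprK hex1 subrK.
  + by rewrite opprK hex1 subrK.
  + have skew' x y z : tau y (br0 x z) = - tau (br0 x z) y.
      by rewrite skew opprK.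
    by rewrite (skew b a c) (skew' a c b) (skew' a b c) !opprK.
Qed.

Lemma leibniz_to_lie_braiding {tau : C0 -> C0 -> C1} : is_bilinear tau ->
  is_leibniz_braiding br1 br0 s t k tau (fun a b => - tau b a) ->
  is_lie_braiding br1 br0 s t k tau.
Proof.
move=> bilin_tau [_ s_tau t_tau [comp_tau _] [hex2 _ mixed _]]; split=> //.
- move=> a b; split; first exact: (s_tau a b).1.
  by rewrite (t_tau a b).1 -br0_anti.
- by move=> x y; rewrite comp_tau -br1_anti.
- by move=> a b c; rewrite mixed opprK addrK.
Qed.

End Braidings.

Theorem mainTheorem6 (K : fieldType) (hK : (2%:R : K) != 0)
  (C1 C0 : lmodType K) (br1 : C1 -> C1 -> C1) (br0 : C0 -> C0 -> C0)
  (s t : C1 -> C0) (e : C0 -> C1) (k : C1 -> C1 -> C1)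
  (tau : C0 -> C0 -> C1) :
  is_cat_lie_alg br1 br0 s t e k ->
  is_bilinear tau ->
  (is_lie_braiding br1 br0 s t k tau <->
   is_leibniz_braiding br1 br0 s t k tau (fun a b => - tau b a)).
Proof.
move=> [[_ br1_anti] [_ br0_anti] cat] bilin_tau.
split; first exact: (lie_to_leibniz_braiding br1_anti br0_anti cat).
exact: (leibniz_to_lie_braiding br1_anti br0_anti bilin_tau).
Qed.
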